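(* Let $D\subset\mathbb N^n$ be finite and not contained in any coordinate hyperplane, $p$ a prime and $r\ge1$. Let $(u_{\mathbf d})_{\mathbf d\in D}$ be nonnegative integers such that $\sum_{\mathbf d}u_{\mathbf d}\mathbf d\equiv0\pmod{p^r-1}$ and $\sum_{\mathbf d}u_{\mathbf d}\mathbf d$ has all coordinates positive. Then $\sum_{\mathbf d}s_p(u_{\mathbf d})\ge s_{D,p}(r)$.
   Context: $s_p(u)$ is the sum of the base-$p$ digits of $u$. $E_{D,p}(r)$ is the set of $U=(u_{\mathbf d})\in\{0,\dots,p^r-1\}^D$ with $\sum u_{\mathbf d}\mathbf d\equiv0\pmod{p^r-1}$ (coordinatewise) and all coordinates of $\sum u_{\mathbf d}\mathbf d$ positive, and $s_{D,p}(r)=\min_{U\in E_{D,p}(r)}\sum_{\mathbf d}s_p(u_{\mathbf d})$. *)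

From mathcomp Require Import all_boot all_order.
Unset Printing Implicit Defensive.

(* Base-p digit sum: the k-th base-p digit of u is (u %/ p^k) %% p; for p >= 2
   all digits of index k > u vanish, so summing k = 0..u suffices. *)
Definition s_p (p u : nat) : nat := \sum_(k < u.+1) (u %/ p ^ k) %% p.

(* D is a finite subset of N^n, given as a duplicate-free list of n-tuples.
   Coordinate j of  sum_{d in D} u_d d , where u is indexed by positions in D. *)
Definition lincomb n (D : seq (n.-tuple nat)) (u : 'I_(size D) -> nat) (j : 'I_n) : nat :=
  \sum_(i < size D) u i * tnth (nth [tuple of nseq n 0] D i) j.

Definition inE n (D : seq (n.-tuple nat)) (p r : nat) (U : {ffun 'I_(size D) -> 'I_(p ^ r)}) : bool :=
  [forall j : 'I_n, ((p ^ r).-1 %| lincomb n D (fun i => nat_of_ord (U i)) j)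
                    && (0 < lincomb n D (fun i => nat_of_ord (U i)) j)].

Definition weight n (D : seq (n.-tuple nat)) (p r : nat) (U : {ffun 'I_(size D) -> 'I_(p ^ r)}) : nat :=
  \sum_(i < size D) s_p p (U i).

(* s_{D,p}(r) = min over E_{D,p}(r) of the weight.  The neutral element of the
   minimum is the sum of all weights (>= each of them), so when E is nonempty
   this is exactly the minimum. *)
Definition s_Dp n (D : seq (n.-tuple nat)) (p r : nat) : nat :=
  \big[minn / \sum_(U | inE n D p r U) weight n D p r U]_(U | inE n D p r U) weight n D p r U.

From Pilot Require Import Defs.
From mathcomp Require Import all_boot all_order.
From mathcomp Require Import zify.

(* Write q = p^r.  Folding u = a q + b (b < q) into a + b keeps u modulo q - 1
   (as q = 1 mod q - 1), keeps u nonzero, and does not increase the base-p digit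
   sum: the digits of a q + b are those of b followed by those of a, and digit
   sums are subadditive since carries only lose digit mass.  Folding every u_d
   until it drops below q yields an element of E_{D,p}(r) of weight at most
   sum_d s_p(u_d). *)

Section DigitSum.

Variable p : nat.
Hypothesis p_gt1 : 1 < p.

Let p_gt0 : 0 < p. Proof. exact: ltnW. Qed.

Lemma sum_digits_stable N M u : u < p ^ N -> N <= M ->
  \sum_(k < M) (u %/ p ^ k) %% p = \sum_(k < N) (u %/ p ^ k) %% p.
Proof.
move=> u_lt le_NM; rewrite -!(big_mkord xpredT (fun k => (u %/ p ^ k) %% p)).
rewrite (big_cat_nat (leq0n N) le_NM) /= [X in _ + X]big1_seq ?addn0 //.
move=> k /andP[_]; rewrite mem_index_iota => /andP[le_Nk _].
rewrite divn_small ?mod0n //; apply: leq_trans u_lt _; exact: leq_pexp2l.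
Qed.

Lemma s_p0 : s_p p 0 = 0.
Proof. by rewrite /s_p big_ord1 div0n mod0n. Qed.

Lemma s_pE u : s_p p u = u %% p + s_p p (u %/ p).
Proof.
have [-> | u_gt0] := posnP u; first by rewrite div0n mod0n s_p0.
rewrite /s_p big_ord_recl expn0 divn1; congr (_ + _).
have u_lt : u %/ p < p ^ (u %/ p).+1 by apply: ltn_trans (ltn_expl _ p_gt1) _; rewrite ltn_exp2l.
rewrite -(@sum_digits_stable _ u _ u_lt) ?ltn_Pdiv //.
by apply: eq_bigr => k _; rewrite expnS divnMA.
Qed.

Lemma s_p_small u : u < p -> s_p p u = u.
Proof. by move=> u_lt; rewrite s_pE divn_small ?modn_small ?s_p0 ?addn0. Qed.

Lemma s_p_mulXnD r a b : b < p ^ r -> s_p p (a * p ^ r + b) = s_p p a + s_p p b.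
Proof.
elim: r b => [|r IH] b b_lt.
  by move: b_lt; rewrite expn0 ltnS leqn0 => /eqP->; rewrite muln1 addn0 s_p0 addn0.
have -> : a * p ^ r.+1 + b = (a * p ^ r + b %/ p) * p + b %% p.
  by rewrite {1}(divn_eq b p) expnSr mulnA mulnDl addnA.
rewrite s_pE modnMDl modn_mod divnMDl // (divn_small (ltn_pmod b p_gt0)) addn0.
rewrite IH ?ltn_divLR -?expnSr // [in RHS](s_pE b); lia.
Qed.

Lemma s_pD_le a b : s_p p (a + b) <= s_p p a + s_p p b.
Proof.
have [N] := ubnP (a + b); elim: N a b => // N IH a b lt_ab.
have [ab0 | ab_gt0] := posnP (a + b).
  by move: ab0 => /eqP; rewrite addn_eq0 => /andP[/eqP-> /eqP->]; rewrite s_p0.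
have lt_div : (a + b) %/ p < N by have := ltn_Pdiv p_gt1 ab_gt0; lia.
set c := (p <= a %% p + b %% p). (* the carry out of the lowest digit *)
have s_c : s_p p c = c by rewrite s_p_small //; case: (c).
have le_quo : s_p p ((a + b) %/ p) <= s_p p (a %/ p) + s_p p (b %/ p) + c.
  rewrite divnD //; apply: leq_trans (IH _ _ _) _; first by rewrite -divnD.
  rewrite s_c leq_add2r IH //; apply: leq_ltn_trans lt_div.
  by rewrite divnD // leq_addr.
have le_rem : (a + b) %% p + c <= a %% p + b %% p.
  by rewrite modnD // /c; case: leqP => h /=; lia.
rewrite s_pE [s_p p a]s_pE [s_p p b]s_pE; lia.
Qed.

End DigitSum.

Section Folding.

Variable q : nat.

Definition fold_base (u : nat) : nat := u %/ q + u %% q.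

(* u iterations suffice: [fold_base] fixes values below q and strictly decreases
   the others. *)
Definition reduce_base (u : nat) : nat := iter u fold_base u.

Lemma reduce_base_ind (P : nat -> Prop) u :
  P u -> (forall v, P v -> P (fold_base v)) -> P (reduce_base u).
Proof.
by move=> Pu PS; rewrite /reduce_base; elim: u {-2}u Pu => //= k IH v Pv; apply/PS/IH.
Qed.

Hypothesis q_gt0 : 0 < q.

Lemma fold_base_small u : u < q -> fold_base u = u.
Proof. by move=> u_lt; rewrite /fold_base divn_small ?modn_small. Qed.

Lemma fold_base_mod u : fold_base u = u %[mod q.-1].
Proof.
have {2}-> : u = u %/ q * q.-1 + fold_base u.
  by rewrite /fold_base {1}(divn_eq u q) -(prednK q_gt0) /=; lia.
by rewrite modnMDl.
Qed.

Lemma fold_base_eq0 u : (fold_base u == 0) = (u == 0).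
Proof.
rewrite /fold_base addn_eq0 {3}(divn_eq u q) addn_eq0 muln_eq0.
by rewrite (negbTE (lt0n_neq0 q_gt0)) orbF.
Qed.

Lemma reduce_base_mod u : reduce_base u = u %[mod q.-1].
Proof.
by apply: (reduce_base_ind (fun v => v = u %[mod q.-1])) => // v <-; exact: fold_base_mod.
Qed.

Lemma reduce_base_eq0 u : (reduce_base u == 0) = (u == 0).
Proof.
by apply: (reduce_base_ind (fun v => (v == 0) = (u == 0))) => // v <-; exact: fold_base_eq0.
Qed.

Hypothesis q_gt1 : 1 < q.

Lemma fold_base_lt u : q <= u -> fold_base u < u.
Proof.
move=> le_qu; have quo_gt0 : 0 < u %/ q by rewrite divn_gt0.
by rewrite /fold_base {3}(divn_eq u q) ltn_add2r -[X in X < _]muln1 ltn_pmul2l.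
Qed.

Lemma reduce_base_lt u : reduce_base u < q.
Proof.
suff: forall k, iter k fold_base u < q \/ iter k fold_base u + k <= u.
  by rewrite /reduce_base; case/(_ u) => // le_u; apply: leq_ltn_trans q_gt0; lia.
elim=> [|k IH]; first by right; rewrite addn0.
have [lt_q | le_q] := ltnP (iter k fold_base u) q.
  by left; rewrite iterS fold_base_small.
case: IH => [|le_u]; first by rewrite ltnNge le_q.
by right; rewrite iterS; have := fold_base_lt _ le_q; lia.
Qed.

End Folding.

Lemma s_p_fold_base p r u : 1 < p -> s_p p (fold_base (p ^ r) u) <= s_p p u.
Proof.
move=> p_gt1; have pr_gt0 : 0 < p ^ r by rewrite expn_gt0 ltnW.
by rewrite {2}(divn_eq u (p ^ r)) s_p_mulXnD ?ltn_pmod //; exact: s_pD_le.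
Qed.

Lemma s_p_reduce_base p r u : 1 < p -> s_p p (reduce_base (p ^ r) u) <= s_p p u.
Proof.
move=> p_gt1; apply: (@reduce_base_ind _ (fun v => s_p p v <= s_p p u)) => // v le_v.
exact: leq_trans (s_p_fold_base _ _ _ p_gt1) le_v.
Qed.

Lemma geq_bigmin_cond (I : eqType) (s : seq I) (P : pred I) (F : I -> nat) x i0 :
  i0 \in s -> P i0 -> \big[minn/x]_(i <- s | P i) F i <= F i0.
Proof.
elim: s => // i s IH; rewrite in_cons big_cons => /predU1P[-> -> | /IH le_i0 Pi0].
  exact: geq_minl.
by case: (P i); [exact: leq_trans (geq_minr _ _) (le_i0 Pi0) | exact: le_i0].
Qed.

Lemma s_Dp_le_weight {n D p r U} : Defs.inE n D p r U -> s_Dp n D p r <= weight n D p r U.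
Proof. exact: geq_bigmin_cond (mem_index_enum U). Qed.

Section LinearCombination.

Context {n : nat} {D : seq (n.-tuple nat)}.

Lemma lincomb_seq (u : n.-tuple nat -> nat) j :
  lincomb n D (fun i => u (nth [tuple of nseq n 0] D i)) j = \sum_(d <- D) u d * tnth d j.
Proof. by rewrite /lincomb (big_nth [tuple of nseq n 0]) big_mkord. Qed.

Lemma lincomb_congr_mod {m} {u v : 'I_(size D) -> nat} :
  (forall i, u i = v i %[mod m]) -> forall j, lincomb n D u j = lincomb n D v j %[mod m].
Proof.
move=> uv j; rewrite /lincomb -modn_summ -[in RHS]modn_summ; congr (_ %% m).
by apply: eq_bigr => i _; rewrite -modnMml uv modnMml.
Qed.

Lemma lincomb_gt0_congr {u v : 'I_(size D) -> nat} :
  (forall i, (u i == 0) = (v i == 0)) -> forall j, (0 < lincomb n D u j) = (0 < lincomb n D v j).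
Proof.
move=> uv j; rewrite /lincomb !lt0n !sum_nat_eq0; congr (~~ _).
by apply: eq_forallb => i; rewrite !muln_eq0 uv.
Qed.

End LinearCombination.

Theorem lemma2p4 (n : nat) (D : seq (n.-tuple nat)) (p r : nat)
  (uD : uniq D)
  (hD : forall j : 'I_n, exists2 d, d \in D & tnth d j != 0)
  (hp : prime p) (hr : 1 <= r)
  (u : n.-tuple nat -> nat)
  (hdiv : forall j : 'I_n, (p ^ r).-1 %| \sum_(d <- D) u d * tnth d j)
  (hpos : forall j : 'I_n, 0 < \sum_(d <- D) u d * tnth d j) :
  s_Dp n D p r <= \sum_(d <- D) s_p p (u d).
Proof.
have p_gt1 := prime_gt1 hp.
have pr_gt1 : 1 < p ^ r by rewrite -(expn0 p) ltn_exp2l.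
have pr_gt0 := ltnW pr_gt1.
pose ud i := u (nth [tuple of nseq n 0] D i).
pose U : {ffun 'I_(size D) -> 'I_(p ^ r)} :=
  [ffun i : 'I_(size D) => Ordinal (reduce_base_lt _ pr_gt0 pr_gt1 (ud i))].
have U_mod i : U i = ud i %[mod (p ^ r).-1] by rewrite ffunE (reduce_base_mod _ pr_gt0).
have U_eq0 i : (U i == 0 :> nat) = (ud i == 0) by rewrite ffunE (reduce_base_eq0 _ pr_gt0).
have U_in : Defs.inE n D p r U.
  apply/forallP => j; rewrite /dvdn (lincomb_congr_mod U_mod) (lincomb_gt0_congr U_eq0).
  by rewrite lincomb_seq -/(dvdn _ _) hdiv hpos.
apply: leq_trans (s_Dp_le_weight U_in) _.
rewrite /weight (big_nth [tuple of nseq n 0]) big_mkord; apply: leq_sum => i _.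
by rewrite ffunE s_p_reduce_base.
Qed.
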